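(* Let $\mathbb{F}$ be a field of characteristic $p>0$. Let $P(t,y)\in\mathbb{F}[[t,y]]$ and $\varphi(t)\in\mathbb{F}[[t]]$ satisfy $$P(t,y)=(y-\varphi(t))^{p^{\ell}e}\cdot Q(t,y)$$ for some $Q\in\mathbb{F}[[t,y]]$, $\ell\ge0$ and $e\ge1$ with $\gcd(p,e)=1$. If $\varphi(0)=0$ and $Q(0,0)\neq0$, then $$\varphi(t)^{p^{\ell}}=\mathcal{D}\left(\frac{y^{2p^{\ell}}\cdot \big(\mathcal{H}^{(p^{\ell})}_y P\big)(ty,y)}{e\cdot P(ty,y)}\right),$$ where the quotient is an element of $\mathbb{F}[[t,y]]$.
   Context: For a bivariate power series $F(t,y)=\sum_{i,j\ge0}F_{i,j}t^iy^j$, the diagonal operator is $\mathcal{D}(F)(t)=\sum_{i\ge0}F_{i,i}t^i$. The Hasse derivative of order $i$ with respect to $y$, $\mathcal{H}^{(i)}_y(F)$, is the coefficient of $z^i$ in $F(t,y+z)$ (viewed as a power series in $z$ with coefficients in $\mathbb{F}[[t,y]]$). *)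

From HB Require Import structures.
From mathcomp Require Import all_boot all_order all_algebra.
Set Implicit Arguments. Unset Strict Implicit. Unset Printing Implicit Defensive.
Import GRing.Theory.
Local Open Scope ring_scope.

Definition ps (F : Type) := nat -> F.
(* bivariate series: i j |-> coefficient of t^i y^j *)
Definition ps2 (F : Type) := nat -> nat -> F.

Section Series.
Variable F : fieldType.

Definition ps_one : ps F := fun n => (n == 0%N)%:R.
Definition ps_mul (a b : ps F) : ps F :=
  fun n => \sum_(k < n.+1) a k * b (n - k)%N.
Definition ps_exp (a : ps F) (k : nat) : ps F := iter k (ps_mul a) ps_one.

Definition ps2_one : ps2 F := fun i j => ((i == 0%N) && (j == 0%N))%:R.
Definition ps2_mul (A B : ps2 F) : ps2 F :=
  fun i j => \sum_(a < i.+1) \sum_(b < j.+1) A a b * B (i - a)%N (j - b)%N.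
Definition ps2_exp (A : ps2 F) (k : nat) : ps2 F := iter k (ps2_mul A) ps2_one.
Definition ps2_scale (c : F) (A : ps2 F) : ps2 F := fun i j => c * A i j.

Definition ymon (k : nat) : ps2 F := fun i j => ((i == 0%N) && (j == k))%:R.

Definition y_minus (phi : ps F) : ps2 F :=
  fun i j => if j == 0%N then - phi i
             else if j == 1%N then (i == 0%N)%:R else 0.

(* Hasse derivative of order k w.r.t. y: coefficient of z^k in P(t, y+z) *)
Definition hasse_y (k : nat) (P : ps2 F) : ps2 F :=
  fun i j => 'C(j + k, k)%:R * P i (j + k)%N.

(* substitution P(t y, y) = sum P_{i,j} t^i y^(i+j) *)
Definition subst_ty (P : ps2 F) : ps2 F :=
  fun a b => if (a <= b)%N then P a (b - a)%N else 0.

Definition diag (R : ps2 F) : ps F := fun i => R i i.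

End Series.

From HB Require Import structures.
From mathcomp Require Import all_boot all_order all_algebra.
From mathcomp Require Import boolp functions zify ring.
Set Implicit Arguments. Unset Strict Implicit. Unset Printing Implicit Defensive.
Import Order.TTheory GRing.Theory.
Local Open Scope ring_scope.

(** Write N = p^l and c = phi^N. In characteristic p, (y - phi)^N = u := y^N - c(t),
    so P = u^e Q.  Since C(j + N, N) = C(j, N) + 1 mod p, the Hasse derivative H_N
    satisfies H_N (y^N B) = y^N H_N B + B and commutes with series in t alone, whence
    H_N P = u^e H_N Q + e u^(e-1) Q.  The substitution t -> t y is a ring morphism
    mapping u to y^N (1 - g), where 1 - g is a unit and y^N g = c(t y).  Hence the
    quotient exists, equals e^-1 y^(2N) (H_N Q / Q)(t y, y) + y^N / (1 - g), and is
    unique because y and units are regular.  On the diagonal only c(t y) survives: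
    every other monomial t^i y^j in the expansion of the quotient has j > i or i > j. *)

(* [ps2 F] is a function type and so carries the pointwise ring structure of
   functions; the alias [ps2_ring F] carries the Cauchy product [ps2_mul]. *)
Definition ps2_ring (F : fieldType) : Type := ps2 F.
HB.instance Definition _ (F : fieldType) :=
  GRing.Zmodule.copy (ps2_ring F) (nat -> nat -> F).

Section Truncation.
Variable F : fieldType.
Local Notation S := (ps2_ring F).
Implicit Types (A B C : S) (q r : {poly {poly F}}).

Lemma ps2_addE A B i j : (A + B) i j = A i j + B i j. Proof. by []. Qed.
Lemma ps2_subE A B i j : (A - B) i j = A i j - B i j. Proof. by []. Qed.

Definition ps2_of_poly q : S := fun i j => q`_j`_i.

Lemma ps2_of_polyM q r :
  ps2_of_poly (q * r) = ps2_mul (ps2_of_poly q) (ps2_of_poly r).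
Proof.
apply/funext => i; apply/funext => j; rewrite /ps2_of_poly /ps2_mul coefM coef_sum.
by rewrite exchange_big; apply: eq_bigr => a _; rewrite coefM.
Qed.

Lemma ps2_of_poly1 : ps2_of_poly 1 = ps2_one F.
Proof.
apply/funext => i; apply/funext => j; rewrite /ps2_of_poly /ps2_one coef1.
by case: (j == 0)%N; rewrite ?coef1 ?coef0 ?andbT ?andbF.
Qed.

(* Coefficients of [ps2_mul A B] up to [t^i y^j] only depend on those of [A] and [B],
   so the ring axioms are inherited from bivariate polynomials by truncation. *)
Definition ps2_trunc n A : {poly {poly F}} := \poly_(j < n) \poly_(i < n) A i j.

Definition ps2_agree i j A B :=
  forall a b, (a <= i)%N -> (b <= j)%N -> A a b = B a b.

Lemma ps2_agree_trunc i j A :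
  ps2_agree i j A (ps2_of_poly (ps2_trunc (maxn i j).+1 A)).
Proof.
move=> a b ha hb; rewrite /ps2_of_poly /ps2_trunc coef_poly ltnS leq_max hb orbT.
by rewrite coef_poly ltnS leq_max ha.
Qed.

Lemma ps2_agree_mul i j A A' B B' : ps2_agree i j A A' -> ps2_agree i j B B' ->
  ps2_agree i j (ps2_mul A B) (ps2_mul A' B').
Proof.
move=> eqA eqB a b ha hb; apply: eq_bigr => a1 _; apply: eq_bigr => b1 _.
have := ltn_ord a1; have := ltn_ord b1; rewrite !ltnS => hb1 ha1.
by rewrite eqA ?eqB //; lia.
Qed.

Lemma ps2_mulA : associative (@ps2_mul F).
Proof.
move=> A B C; apply/funext => i; apply/funext => j.
have eA := @ps2_agree_trunc i j A; have eB := @ps2_agree_trunc i j B.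
have eC := @ps2_agree_trunc i j C.
rewrite (ps2_agree_mul eA (ps2_agree_mul eB eC)) //.
by rewrite (ps2_agree_mul (ps2_agree_mul eA eB) eC) // -!ps2_of_polyM mulrA.
Qed.

Lemma ps2_mulC : commutative (@ps2_mul F).
Proof.
move=> A B; apply/funext => i; apply/funext => j.
have eA := @ps2_agree_trunc i j A; have eB := @ps2_agree_trunc i j B.
by rewrite (ps2_agree_mul eA eB) // (ps2_agree_mul eB eA) // -!ps2_of_polyM mulrC.
Qed.

Lemma ps2_mul1 : left_id (ps2_one F) (@ps2_mul F).
Proof.
move=> A; apply/funext => i; apply/funext => j.
have eA := @ps2_agree_trunc i j A.
have e1 : ps2_agree i j (ps2_of_poly 1) (ps2_of_poly 1) by [].
by rewrite -ps2_of_poly1 (ps2_agree_mul e1 eA) // -ps2_of_polyM mul1r -eA.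
Qed.

Lemma ps2_mulDl : left_distributive (@ps2_mul F) (@GRing.add S).
Proof.
move=> A B C; apply/funext => i; apply/funext => j; rewrite ps2_addE -big_split.
by apply: eq_bigr => a _; rewrite -big_split; apply: eq_bigr => b _; rewrite mulrDl.
Qed.

Lemma ps2_one_neq0 : ps2_one F != 0 :> S.
Proof. by apply/eqP => /(congr1 (fun A : S => A 0%N 0%N)) /eqP; rewrite oner_eq0. Qed.

End Truncation.

HB.instance Definition _ (F : fieldType) := GRing.Zmodule_isComNzRing.Build (ps2_ring F)
  (@ps2_mulA F) (@ps2_mulC F) (@ps2_mul1 F) (@ps2_mulDl F) (@ps2_one_neq0 F).

Section Coefficients.
Variable F : fieldType.
Local Notation S := (ps2_ring F).
Implicit Types (A B C : S) (q : {poly {poly F}}).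

Lemma ps2_mulE A B i j :
  (A * B) i j = \sum_(a < i.+1) \sum_(b < j.+1) A a b * B (i - a)%N (j - b)%N.
Proof. by []. Qed.

Lemma ps2_sumE I (r : seq I) (P : pred I) (G : I -> S) i j :
  (\sum_(k <- r | P k) G k) i j = \sum_(k <- r | P k) G k i j.
Proof. by apply: (big_rec2 (fun (X : S) y => X i j = y)) => // k X y _ <-. Qed.

Lemma ps2_of_poly_is_zmod_morphism : zmod_morphism (@ps2_of_poly F).
Proof. by move=> q r; apply/funext => i; apply/funext => j; rewrite /ps2_of_poly !coefB. Qed.

Lemma ps2_of_poly_is_monoid_morphism : monoid_morphism (@ps2_of_poly F).
Proof. by split; [exact: ps2_of_poly1 | exact: ps2_of_polyM]. Qed.

HB.instance Definition _ := GRing.isZmodMorphism.Build {poly {poly F}} S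
  (@ps2_of_poly F) ps2_of_poly_is_zmod_morphism.
HB.instance Definition _ := GRing.isMonoidMorphism.Build {poly {poly F}} S
  (@ps2_of_poly F) ps2_of_poly_is_monoid_morphism.

Lemma ps2_of_poly_mulE q B i j :
  (ps2_of_poly q * B) i j = (q * ps2_trunc (maxn i j).+1 B)`_j`_i.
Proof.
have eq_q : ps2_agree i j (ps2_of_poly q) (ps2_of_poly q) by [].
by rewrite [LHS](ps2_agree_mul eq_q (@ps2_agree_trunc _ i j B)) // -ps2_of_polyM.
Qed.

Definition ps2C (c : F) : S := ps2_of_poly c%:P%:P.
HB.instance Definition _ := GRing.RMorphism.copy ps2C
  (@ps2_of_poly F \o polyC \o polyC).

Definition ps2Y : S := ps2_of_poly 'X.

Lemma ps2CM c B i j : (ps2C c * B) i j = c * B i j.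
Proof.
by rewrite ps2_of_poly_mulE !coefCM [B i j](@ps2_agree_trunc _ i j).
Qed.

Lemma ps2YXM k B i j :
  (ps2Y ^+ k * B) i j = if (k <= j)%N then B i (j - k)%N else 0.
Proof.
rewrite -rmorphXn ps2_of_poly_mulE coefXnM; case: ltnP => le; first by rewrite coef0.
by rewrite [RHS](@ps2_agree_trunc _ i j) ?leq_subr.
Qed.

End Coefficients.

Section WeightedOrder.
Variable F : fieldType.
Local Notation S := (ps2_ring F).
Implicit Types (A B : S) (a b k m n : int).

Definition wval_ge a b k A :=
  forall i j : nat, a * i%:Z + b * j%:Z < k -> A i j = 0.

Lemma wval_geW a b m n A : m <= n -> wval_ge a b n A -> wval_ge a b m A.
Proof. by move=> le_mn vA i j lt; apply: vA; exact: lt_le_trans le_mn. Qed.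

Lemma wval_ge1 a b : wval_ge a b 0 1.
Proof. by move=> [|i] [|j] //; rewrite !mulr0 addr0 ltxx. Qed.

Lemma wval_geC a b c : wval_ge a b 0 (ps2C c).
Proof. by move=> i j lt; rewrite -[ps2C c]mulr1 ps2CM (wval_ge1 lt) mulr0. Qed.

Lemma wval_geB a b k A B : wval_ge a b k A -> wval_ge a b k B -> wval_ge a b k (A - B).
Proof. by move=> vA vB i j lt; rewrite ps2_subE vA ?vB ?subr0. Qed.

Lemma wval_geM a b m n A B :
  wval_ge a b m A -> wval_ge a b n B -> wval_ge a b (m + n) (A * B).
Proof.
move=> vA vB i j lt; rewrite ps2_mulE; apply: big1 => i1 _; apply: big1 => j1 _.
have := ltn_ord i1; have := ltn_ord j1; rewrite !ltnS => le_j le_i.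
have [/vA -> | ge] := boolP (a * i1%:Z + b * j1%:Z < m); first by rewrite mul0r.
by rewrite vB ?mulr0 // -!subzn //; nia.
Qed.

Lemma wval_geX a b m A (e : nat) : wval_ge a b m A -> wval_ge a b (m * e%:Z) (A ^+ e).
Proof.
move=> vA; elim: e => [|e IH]; first by rewrite mulr0; exact: wval_ge1.
by rewrite exprS intS mulrDr mulr1; exact: wval_geM.
Qed.

Lemma wval_ge_diag a b k A : a + b = 0 -> 0 < k -> wval_ge a b k A -> forall i, A i i = 0.
Proof. by move=> ab0 k_gt0 vA i; apply: vA; rewrite -mulrDl ab0 mul0r. Qed.

End WeightedOrder.

Section Inverse.
Variable F : fieldType.
Local Notation S := (ps2_ring F).
Implicit Types (A B W X : S).

(* When [X 0 0 = 0], the coefficient of [t^i y^j] in [\sum_k X ^+ k] is already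
   reached by the partial sum up to [k = i + j]. *)
Definition ps2_geom X : S := fun i j => (\sum_(k < (i + j).+1) X ^+ k) i j.

Lemma ps2_geomM X : X 0%N 0%N = 0 -> ps2_geom X * (1 - X) = 1.
Proof.
move=> X00; have vX : wval_ge 1 1 1 X.
  by move=> i j lt; have [-> ->] : i = 0%N /\ j = 0%N by lia.
have vXk k i j : (i + j < k)%N -> (X ^+ k) i j = 0.
  by move=> lt; apply: (wval_geX vX); lia.
apply/funext => i; apply/funext => j.
set G := \sum_(k < (i + j).+1) X ^+ k.
have eG : ps2_agree i j (ps2_geom X) G.
  move=> a b le_a le_b; rewrite /ps2_geom /G !ps2_sumE.
  rewrite (big_ord_widen (i + j).+1 (fun k => (X ^+ k) a b)); last by lia.
  by rewrite big_mkcond; apply: eq_bigr => k _; case: ltnP => // le; rewrite vXk.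
have eX : ps2_agree i j (1 - X) (1 - X) by [].
rewrite -[LHS]/(ps2_mul _ _ i j) (ps2_agree_mul eG eX) //.
have -> : ps2_mul G (1 - X) = 1 - X ^+ (i + j).+1.
  by rewrite -[ps2_mul _ _]/(G * (1 - X)) mulrC -opprB mulNr -subrX1 opprB.
by rewrite ps2_subE vXk ?subr0.
Qed.

Definition ps2_unit : {pred S} := fun W => W 0%N 0%N != 0.

Definition ps2_inv W : S :=
  if W 0%N 0%N == 0 then W
  else ps2C (W 0%N 0%N)^-1 * ps2_geom (1 - ps2C (W 0%N 0%N)^-1 * W).

Lemma ps2_mulVr : {in ps2_unit, left_inverse 1 ps2_inv *%R}.
Proof.
move=> W W00; rewrite /ps2_inv (negbTE W00); set c := W 0%N 0%N.
set X := 1 - ps2C c^-1 * W.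
have X00 : X 0%N 0%N = 0 by rewrite /X ps2_subE ps2CM mulVf // subrr.
have -> : W = ps2C c * (1 - X).
  by rewrite /X subKr mulrA -rmorphM mulfV // rmorph1 mul1r.
by rewrite mulrCA !mulrA -rmorphM mulfV // rmorph1 mul1r ps2_geomM.
Qed.

Lemma ps2_unitPl W V : V * W = 1 -> ps2_unit W.
Proof.
move/(congr1 (fun A : S => A 0%N 0%N)); rewrite ps2_mulE !big_ord1 /= => VW1.
by apply/eqP => W00; move: VW1; rewrite W00 mulr0 => /esym/eqP; rewrite oner_eq0.
Qed.

Lemma ps2_invr_out : {in [predC ps2_unit], ps2_inv =1 id}.
Proof. by move=> W; rewrite inE /= negbK /ps2_inv => ->. Qed.

HB.instance Definition _ := GRing.ComNzRing_hasMulInverse.Build S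
  ps2_mulVr ps2_unitPl ps2_invr_out.

Lemma ps2_unitE W : (W \is a GRing.unit) = (W 0%N 0%N != 0).
Proof. by []. Qed.

Lemma wval_geV a b W : wval_ge a b 0 W -> wval_ge a b 0 W^-1.
Proof.
move=> vW; rewrite /GRing.inv /= /ps2_inv; case: eqP => // _.
rewrite -[0]add0r; apply: wval_geM; first exact: wval_geC.
have vX : wval_ge a b 0 (1 - ps2C (W 0%N 0%N)^-1 * W).
  apply: wval_geB; first exact: wval_ge1.
  by rewrite -[0]add0r; apply: wval_geM; first exact: wval_geC.
move=> i j lt; rewrite /ps2_geom ps2_sumE big1 // => k _.
by apply: (wval_geX vX); rewrite mul0r.
Qed.

Lemma ps2_YX_rreg k : GRing.rreg (ps2Y F ^+ k).
Proof.
move=> A B eqAB; apply/funext => i; apply/funext => j.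
have := congr1 (fun C : S => C i (j + k)%N) eqAB.
by rewrite /= mulrC [B * _]mulrC !ps2YXM leq_addl addnK.
Qed.

End Inverse.

Section Embeddings.
Variable F : fieldType.
Local Notation S := (ps2_ring F).
Local Notation Y := (ps2Y F).
Implicit Types (a c : ps F) (A B : S).

Lemma ps2_oneE i j : (1 : S) i j = ((i == 0%N) && (j == 0%N))%:R.
Proof. by []. Qed.

Lemma ps2C00 (x : F) : ps2C x 0%N 0%N = x.
Proof. by rewrite -[ps2C x]mulr1 ps2CM mulr1. Qed.

Lemma pchar_ps2 : [pchar S] =i [pchar F].
Proof. by move=> q; rewrite !inE -(rmorph_nat (@ps2C F)) fmorph_eq0. Qed.

Lemma ps2_unit_nat n : ((n%:R : S) \is a GRing.unit) = (n%:R != 0 :> F).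
Proof. by rewrite ps2_unitE -(rmorph_nat (@ps2C F)) /= ps2C00. Qed.

Lemma wval_ge_nat (a b : int) n : wval_ge a b 0 (n%:R : S).
Proof. by rewrite -(rmorph_nat (@ps2C F)); exact: wval_geC. Qed.

Lemma ymonE k : ymon F k = Y ^+ k.
Proof.
apply/funext => i; apply/funext => j; rewrite -[_ ^+ k]mulr1 ps2YXM ps2_oneE /ymon.
case: leqP => [le | lt]; first by rewrite subn_eq0 [j == k]eqn_leq le andbT.
by rewrite (ltn_eqF lt) andbF.
Qed.

Lemma wval_geY : wval_ge (-1) 1 1 Y.
Proof.
move=> i j; rewrite -[Y]expr1 -ymonE /ymon.
by case: eqP => [-> | _]; case: eqP => [-> | _] //; lia.
Qed.

Lemma ps2_expE A k : ps2_exp A k = A ^+ k.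
Proof. by elim: k => // k IH; rewrite exprS -IH. Qed.

Lemma ps2_scaleE (x : F) A : ps2_scale x A = ps2C x * A.
Proof. by apply/funext => i; apply/funext => j; rewrite ps2CM. Qed.

Definition ps2_of_ps a : S := fun i j => if j == 0%N then a i else 0.

Lemma ps2_of_ps_mulE a B i j :
  (ps2_of_ps a * B) i j = \sum_(i1 < i.+1) a i1 * B (i - i1)%N j.
Proof.
rewrite ps2_mulE; apply: eq_bigr => i1 _.
by rewrite big_ord_recl /= subn0 big1 ?addr0 // => j1 _; rewrite mul0r.
Qed.

Lemma ps2_of_psM a c : ps2_of_ps a * ps2_of_ps c = ps2_of_ps (ps_mul a c).
Proof.
apply/funext => i; apply/funext => j; rewrite ps2_of_ps_mulE /ps2_of_ps.
by case: eqP => // _; rewrite big1 // => i1 _; rewrite mulr0.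
Qed.

Lemma ps2_of_psX a k : ps2_of_ps a ^+ k = ps2_of_ps (ps_exp a k).
Proof.
elim: k => [|k IH]; last by rewrite exprS IH ps2_of_psM.
apply/funext => i; apply/funext => j; rewrite expr0 ps2_oneE /ps2_of_ps /=.
by case: (j == 0%N); rewrite ?andbT ?andbF.
Qed.

Lemma wval_ge_ps2_of_ps a : a 0%N = 0 -> wval_ge 1 1 1 (ps2_of_ps a).
Proof. by move=> a0 i j lt; have [-> ->] : i = 0%N /\ j = 0%N by lia. Qed.

Lemma y_minusE a : y_minus a = Y - ps2_of_ps a :> S.
Proof.
apply/funext => i; apply/funext => j; rewrite ps2_subE -[Y]expr1 -ymonE.
rewrite /y_minus /ymon /ps2_of_ps.
by case: j => [|[|j]] /=; rewrite ?eqxx ?andbT ?andbF ?mulr0n ?sub0r ?subr0 ?oppr0.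
Qed.

End Embeddings.

Lemma exprBn_pchar (R : comNzRingType) (x y : R) n :
  [pchar R].-nat n -> (x - y) ^+ n = x ^+ n - y ^+ n.
Proof.
by move=> Rn; have := exprDn_pchar (x - y) y Rn; rewrite subrK => ->; rewrite addrK.
Qed.

Section Hasse.
Variable F : fieldType.
Local Notation S := (ps2_ring F).
Local Notation Y := (ps2Y F).
Implicit Types (a : ps F) (A B : S).

Lemma coef_XaddC1n n k : (('X + 1 : {poly F}) ^+ n)`_k = 'C(n, k)%:R.
Proof.
have -> : 'C(n, k)%:R = if (k < n.+1)%N then 'C(n, k)%:R else 0 :> F.
  by case: ltnP => // lt; rewrite bin_small.
rewrite exprD1n coef_sum -(@big_ord1_eq _ 0 +%R (fun i => 'C(n, i)%:R)) [RHS]big_mkcond.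
apply: eq_bigr => i _.
by rewrite coefMn coefXn eq_sym; case: eqP => _; rewrite ?mulr1n ?mulr0n ?mul0rn.
Qed.

Lemma bin_addn_pchar p l j : p \in [pchar F] ->
  'C(j + p ^ l, p ^ l)%:R = 'C(j, p ^ l)%:R + 1 :> F.
Proof.
move=> charFp; rewrite -!coef_XaddC1n exprD.
have -> : ('X + 1 : {poly F}) ^+ (p ^ l) = 'X ^+ (p ^ l) + 1.
  rewrite exprDn_pchar ?expr1n // pnatX pnatE ?(pcharf_prime charFp) //.
  by rewrite (pchar_poly F) charFp.
by rewrite mulrDr mulr1 coefD coefMXn ltnn subnn coef_XaddC1n bin0 addrC.
Qed.

Definition ps2_hasse k : S -> S := @hasse_y F k.

Lemma ps2_hasse_is_zmod_morphism k : zmod_morphism (ps2_hasse k).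
Proof.
move=> A B; apply/funext => i; apply/funext => j.
by rewrite /ps2_hasse /hasse_y !ps2_subE mulrBr.
Qed.

HB.instance Definition _ k := GRing.isZmodMorphism.Build S S (ps2_hasse k)
  (ps2_hasse_is_zmod_morphism k).

Lemma ps2_hasse_ps2_of_psM k a B :
  ps2_hasse k (ps2_of_ps a * B) = ps2_of_ps a * ps2_hasse k B.
Proof.
apply/funext => i; apply/funext => j.
rewrite /ps2_hasse /hasse_y !ps2_of_ps_mulE mulr_sumr.
by apply: eq_bigr => i1 _; rewrite mulrCA.
Qed.

Variables (p l : nat).
Hypothesis charFp : p \in [pchar F].
Local Notation N := (p ^ l)%N.

Lemma ps2_hasse_YXM B : ps2_hasse N (Y ^+ N * B) = Y ^+ N * ps2_hasse N B + B.
Proof.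
apply/funext => i; apply/funext => j.
rewrite ps2_addE /ps2_hasse /hasse_y !ps2YXM leq_addl addnK bin_addn_pchar //.
case: leqP => le; first by rewrite subnK // mulrDl mul1r.
by rewrite bin_small //; ring.
Qed.

Lemma ps2_hasse_YXsubM a B :
  ps2_hasse N ((Y ^+ N - ps2_of_ps a) * B) = (Y ^+ N - ps2_of_ps a) * ps2_hasse N B + B.
Proof. by rewrite mulrBl raddfB /= ps2_hasse_YXM ps2_hasse_ps2_of_psM mulrBl addrAC. Qed.

Lemma ps2_hasse_YXsubXM a k B :
  ps2_hasse N ((Y ^+ N - ps2_of_ps a) ^+ k * B) =
  (Y ^+ N - ps2_of_ps a) ^+ k * ps2_hasse N B + k%:R * (Y ^+ N - ps2_of_ps a) ^+ k.-1 * B.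
Proof.
elim: k B => [|k IH] B; first by rewrite !expr0 mul1r; ring.
rewrite exprS -mulrA ps2_hasse_YXsubM IH.
by case: k {IH} => [|k] /=; rewrite ?exprS; ring.
Qed.

End Hasse.

Section Substitution.
Variable F : fieldType.
Local Notation S := (ps2_ring F).
Local Notation Y := (ps2Y F).
Implicit Types (f : ps F) (A B : S).

Definition ps2_subst : S -> S := @subst_ty F.

Lemma sum_shift_window (g : nat -> F) m k n : (m + k <= n)%N ->
  \sum_(c < n | (m <= c < m + k)%N) g (c - m)%N = \sum_(b < k) g b.
Proof.
move=> le; transitivity (\sum_(m <= c < m + k) g (c - m)%N).
  rewrite (big_nat_widen _ _ _ _ _ le) big_geq_mkord.
  by apply: eq_bigl => c; rewrite andbC.
rewrite -{1}[m]add0n big_addn addKn big_mkord.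
by apply: eq_bigr => b _; rewrite addnK.
Qed.

Lemma ps2_subst_mulE A B a b a1 : (a1 <= a <= b)%N ->
  \sum_(c < b.+1) ps2_subst A a1 c * ps2_subst B (a - a1)%N (b - c)%N
  = \sum_(b1 < (b - a).+1) A a1 b1 * B (a - a1)%N (b - a - b1)%N.
Proof.
move=> /andP[le1 le2].
rewrite (bigID (fun c : 'I_b.+1 => (a1 <= c < a1 + (b - a).+1)%N)) /=.
rewrite [X in _ + X]big1 ?addr0 => [|c out]; last first.
  rewrite /ps2_subst /subst_ty; case: ifP => h1; case: ifP => h2; rewrite ?mul0r ?mulr0 //.
  by have := ltn_ord c; lia.
pose G b1 := A a1 b1 * B (a - a1)%N (b - a - b1)%N.
rewrite -(sum_shift_window G (m := a1) (n := b.+1)); last by lia.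
apply: eq_bigr => c /andP[h1 h2]; rewrite /G /ps2_subst /subst_ty h1 ifT; last by lia.
by congr (_ * B _ _); lia.
Qed.

Lemma ps2_substM A B : ps2_subst (A * B) = ps2_subst A * ps2_subst B.
Proof.
apply/funext => a; apply/funext => b; rewrite [LHS]/ps2_subst /subst_ty !ps2_mulE.
case: leqP => [le | lt].
  by apply: eq_bigr => a1 _; rewrite ps2_subst_mulE //; have := ltn_ord a1; lia.
apply/esym/big1 => a1 _; apply: big1 => c _; rewrite /ps2_subst /subst_ty.
case: ifP => h1; case: ifP => h2; rewrite ?mul0r ?mulr0 //.
by have := ltn_ord a1; have := ltn_ord c; lia.
Qed.

Lemma ps2_subst_is_zmod_morphism : zmod_morphism ps2_subst.
Proof.
move=> A B; apply/funext => a; apply/funext => b.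
by rewrite ps2_subE /ps2_subst /subst_ty ps2_subE; case: ifP; rewrite ?subr0.
Qed.

Lemma ps2_subst_is_monoid_morphism : monoid_morphism ps2_subst.
Proof.
split=> [|A B]; last exact: ps2_substM.
apply/funext => a; apply/funext => b; rewrite /ps2_subst /subst_ty !ps2_oneE.
by case: a => [|a] /=; [rewrite subn0 | case: ifP].
Qed.

HB.instance Definition _ := GRing.isZmodMorphism.Build S S ps2_subst
  ps2_subst_is_zmod_morphism.
HB.instance Definition _ := GRing.isMonoidMorphism.Build S S ps2_subst
  ps2_subst_is_monoid_morphism.

Lemma ps2_substYX k : ps2_subst (Y ^+ k) = Y ^+ k.
Proof.
rewrite -ymonE; apply/funext => a; apply/funext => b; rewrite /ps2_subst /subst_ty /ymon.
by case: a => [|a] /=; [rewrite subn0 | case: ifP].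
Qed.

Lemma wval_ge_subst A : wval_ge (-1) 1 0 (ps2_subst A).
Proof. by move=> i j lt; rewrite /ps2_subst /subst_ty; case: leqP => // le; lia. Qed.

Lemma wval_ge_subst_ps2_of_ps f : wval_ge 1 (-1) 0 (ps2_subst (ps2_of_ps f)).
Proof.
move=> i j lt; rewrite /ps2_subst /subst_ty /ps2_of_ps.
by case: leqP => // le; case: eqP => // eq0; lia.
Qed.

Lemma ps2_subst_ps2_of_ps_diag f i : ps2_subst (ps2_of_ps f) i i = f i.
Proof. by rewrite /ps2_subst /subst_ty leqnn subnn. Qed.

Variables (N : nat) (c : ps F).
Hypothesis c_small : forall i, (i < N)%N -> c i = 0.

Definition subst_quot : S := fun i j => if i == (j + N)%N then c i else 0.

Lemma ps2_subst_ps2_of_ps : ps2_subst (ps2_of_ps c) = Y ^+ N * subst_quot.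
Proof.
apply/funext => a; apply/funext => b; rewrite ps2YXM /ps2_subst /subst_ty /ps2_of_ps.
rewrite /subst_quot subn_eq0; case: (ltngtP a b) => [lt | gt | <-].
- by case: leqP => // le; rewrite subnK // (ltn_eqF lt).
- by case: leqP => // le; rewrite subnK // (gtn_eqF gt).
- by case: leqP => [le | lt]; [rewrite subnK // eqxx | rewrite c_small].
Qed.

Lemma wval_ge_subst_quot : wval_ge 1 (-1) N%:Z subst_quot.
Proof. by move=> i j lt; rewrite /subst_quot; case: eqP => // eq; lia. Qed.

End Substitution.

Section Main.
Variables (F : fieldType) (p l : nat) (phi : ps F) (k : nat) (Q : ps2_ring F).
Hypotheses (charFp : p \in [pchar F]) (phi0 : phi 0%N = 0).
Hypotheses (e_neq0 : k.+1%:R != 0 :> F) (Q_unit : Q \is a GRing.unit).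
Local Notation S := (ps2_ring F).
Local Notation Y := (ps2Y F).
Local Notation N := (p ^ l)%N.
Local Notation c := (ps_exp phi N).
Local Notation u := (Y ^+ N - ps2_of_ps c).
Local Notation g := (subst_quot N c).
Local Notation v := (1 - g).
Local Notation P := (u ^+ k.+1 * Q).

Lemma N_gt0 : (0 < N)%N.
Proof. by rewrite expn_gt0 prime_gt0 ?(pcharf_prime charFp). Qed.

Lemma y_minus_expE : (y_minus phi : S) ^+ N = u.
Proof.
rewrite y_minusE exprBn_pchar ?ps2_of_psX //.
by rewrite pnatX pnatE ?(pcharf_prime charFp) // pchar_ps2 charFp.
Qed.

Lemma c_small i : (i < N)%N -> c i = 0.
Proof.
move=> lt; have vc : wval_ge 1 1 (1 * N%:Z) (ps2_of_ps c).
  by rewrite -ps2_of_psX; exact/wval_geX/wval_ge_ps2_of_ps.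
by have := vc i 0%N; rewrite /ps2_of_ps /=; apply; lia.
Qed.

Lemma v_unit : v \is a GRing.unit.
Proof.
by rewrite ps2_unitE ps2_subE /subst_quot add0n (ltn_eqF N_gt0) subr0 oner_neq0.
Qed.

Lemma subst_u : ps2_subst u = Y ^+ N * v.
Proof. by rewrite rmorphB /= ps2_substYX (ps2_subst_ps2_of_ps c_small) mulrBr mulr1. Qed.

(* [y^(2N) (H_N P)(t y, y) / (e P(t y, y))], computed from [P = u^e Q]. *)
Definition hasse_quot : S :=
  k.+1%:R^-1 * Y ^+ (2 * N) * ps2_subst (ps2_hasse N Q * Q^-1) + Y ^+ N * v^-1.

Lemma subst_P : ps2_subst P = (Y ^+ N * v) ^+ k.+1 * ps2_subst Q.
Proof. by rewrite rmorphM rmorphXn /= subst_u. Qed.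

Lemma subst_hasse_P : ps2_subst (ps2_hasse N P) =
  (Y ^+ N * v) ^+ k.+1 * ps2_subst (ps2_hasse N Q)
  + k.+1%:R * (Y ^+ N * v) ^+ k * ps2_subst Q.
Proof.
by rewrite ps2_hasse_YXsubXM // rmorphD /= !rmorphM /= !rmorphXn rmorph_nat /= subst_u.
Qed.

Lemma hasse_quotP :
  hasse_quot * (k.+1%:R * ps2_subst P) = Y ^+ (2 * N) * ps2_subst (ps2_hasse N P).
Proof.
have E_unit : (k.+1%:R : S) \is a GRing.unit by rewrite ps2_unit_nat.
have SQ_unit : ps2_subst Q \is a GRing.unit by rewrite rmorph_unit.
rewrite subst_P subst_hasse_P /hasse_quot rmorphM rmorphV //= mul2n -addnn exprD.
move: (mulVr E_unit) (mulVr SQ_unit) (mulVr v_unit).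
move: k.+1%:R^-1 (ps2_subst Q)^-1 v^-1 => Ei SQi vi EiE SQiSQ viv.
move: (ps2_subst Q) (ps2_subst (ps2_hasse N Q)) (Y ^+ N) => SQ SH Z in EiE SQiSQ *.
transitivity (Ei * k.+1%:R * (SQi * SQ) * (Z * Z * (Z * v) ^+ k.+1 * SH)
  + vi * v * (k.+1%:R * Z * Z * (Z * v) ^+ k * SQ)); first by rewrite !exprS; ring.
by rewrite EiE SQiSQ viv !exprS; ring.
Qed.

Lemma hasse_quot_unique (R : S) :
  R * (k.+1%:R * ps2_subst P) = Y ^+ (2 * N) * ps2_subst (ps2_hasse N P) -> R = hasse_quot.
Proof.
rewrite -hasse_quotP; set W := k.+1%:R * v ^+ k.+1 * ps2_subst Q.
have W_unit : W \is a GRing.unit.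
  by rewrite !unitrM ps2_unit_nat e_neq0 unitrX ?v_unit ?rmorph_unit.
have -> : k.+1%:R * ps2_subst P = Y ^+ (N * k.+1) * W.
  by rewrite subst_P exprMn exprM /W; ring.
move=> eqR; apply: (@ps2_YX_rreg F (N * k.+1)); apply: (mulIr W_unit).
by rewrite -!mulrA.
Qed.

Lemma diag_hasse_quot : diag hasse_quot = c.
Proof.
set D := ps2_subst (ps2_of_ps c).
have vV : v^-1 = 1 + g + g * g * v^-1.
  have := mulrV v_unit; move: v^-1 => w vw.
  transitivity (v * w + g * (v * w) + g * g * w); first by ring.
  by rewrite vw mulr1.
(* [D = c(t y)] is diagonal; each other summand only has monomials off the diagonal. *)
have -> : hasse_quot = k.+1%:R^-1 * Y ^+ (2 * N) * ps2_subst (ps2_hasse N Q * Q^-1)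
    + (Y ^+ N + D + D * g * v^-1).
  by rewrite /hasse_quot /D (ps2_subst_ps2_of_ps c_small) {1}vV; ring.
have w1 : wval_ge (-1) 1 (0 + 1 * (2 * N)%:Z + 0)
    (k.+1%:R^-1 * Y ^+ (2 * N) * ps2_subst (ps2_hasse N Q * Q^-1)).
  apply: wval_geM; last exact: wval_ge_subst.
  by apply: wval_geM; [exact/wval_geV/wval_ge_nat | exact/wval_geX/wval_geY].
have w2 : wval_ge (-1) 1 (1 * N%:Z) (Y ^+ N) by exact/wval_geX/wval_geY.
have w4 : wval_ge 1 (-1) (0 + N%:Z + 0) (D * g * v^-1).
  apply: wval_geM; last apply: wval_geV.
    by apply: wval_geM; [exact: wval_ge_subst_ps2_of_ps | exact: wval_ge_subst_quot].
  by apply: wval_geB; [exact: wval_ge1 | exact: (wval_geW _ (@wval_ge_subst_quot F N c))].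
have N_gt0 := N_gt0.
apply/funext => i; rewrite /diag !ps2_addE (wval_ge_diag _ _ w1) ?(wval_ge_diag _ _ w2)
  ?(wval_ge_diag _ _ w4) // ?add0r ?addr0 /D ?ps2_subst_ps2_of_ps_diag //; lia.
Qed.

End Main.

Theorem theoremA3 (F : fieldType) (p : nat) (charp : (p \in [pchar F])%N)
    (P Q : ps2 F) (phi : ps F) (l e : nat)
    (e_ge1 : (1 <= e)%N) (cop : coprime p e)
    (HP : P = ps2_mul (ps2_exp (y_minus phi) (p ^ l * e)%N) Q)
    (phi0 : phi 0%N = 0) (Q00 : Q 0%N 0%N != 0) :
  (exists R : ps2 F,
      ps2_mul R (ps2_scale e%:R (subst_ty P))
      = ps2_mul (ymon F (2 * p ^ l)%N) (subst_ty (hasse_y (p ^ l) P))) /\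
  (forall R : ps2 F,
      ps2_mul R (ps2_scale e%:R (subst_ty P))
      = ps2_mul (ymon F (2 * p ^ l)%N) (subst_ty (hasse_y (p ^ l) P)) ->
      ps_exp phi (p ^ l) = diag R).
Proof.
case: e e_ge1 cop HP => // k _ cop HP.
have e_neq0 : k.+1%:R != 0 :> F.
  by rewrite -(dvdn_pcharf charp) -prime_coprime ?(pcharf_prime charp).
have Q_unit : (Q : ps2_ring F) \is a GRing.unit by [].
have {HP}-> : P = (ps2Y F ^+ (p ^ l) - ps2_of_ps (ps_exp phi (p ^ l))) ^+ k.+1 * Q
    :> ps2_ring F.
  by rewrite HP ps2_expE exprM y_minus_expE.
rewrite ps2_scaleE (rmorph_nat (@ps2C F)) ymonE.
split; first by exists (hasse_quot p l phi k Q); exact: hasse_quotP.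
by move=> R /hasse_quot_unique -> //; rewrite diag_hasse_quot.
Qed.
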